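(* Let $G$ be a Lie group with identity element $e$, and for an integer $c$ let $\mu_c\colon G\to G$ be the power map $\mu_c(x)=x^c$. Then for any integers $a,b$, $\mathrm{D}(\mu_a,\mu_b)=\mathrm{D}(\mu_{a-b},e)$, where $e$ denotes the constant map $G\to G$ with value $e$.
   Context: For continuous maps $f,g\colon X\to Y$, the homotopic distance $\mathrm{D}(f,g)$ is the least integer $n\geq 0$ such that there is an open cover $\{U_0,\dots,U_n\}$ of $X$ with $f|_{U_j}\simeq g|_{U_j}$ for all $j$; if no such cover exists, $\mathrm{D}(f,g)=\infty$. *)

From HB Require Import structures.
From mathcomp Require Import all_boot all_order all_algebra.
From mathcomp Require Import all_classical all_reals all_analysis.
From mathcomp Require Import monoid.
From mathcomp Require Import Rstruct Rstruct_topology.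
From Stdlib Require Import Rdefinitions.

Set Implicit Arguments.
Unset Strict Implicit.
Unset Printing Implicit Defensive.

Import Order.TTheory.
Local Open Scope classical_set_scope.

HB.mixin Record isTopGroup G of Group G & Topological G := {
  mulg_continuous : continuous (fun p : G * G => (p.1 * p.2)%g);
  invg_continuous : continuous (fun x : G => (x^-1)%g)
}.

#[short(type="topGroupType")]
HB.structure Definition TopGroup :=
  {G of isTopGroup G & Group G & Topological G}.

Definition zpowg (G : groupType) (c : int) (x : G) : G :=
  match c with
  | Posz n => (x ^+ n)%g
  | Negz n => ((x ^+ n.+1)^-1)%g
  end.

Definition powmap (G : groupType) (c : int) : G -> G := zpowg c.

Definition unit_interval : set R := `[0%R, 1%R].

(* f|_U is homotopic to g|_U (as maps U -> Y, U with the subspace topology):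
   there is a map H : X * R -> Y whose restriction to U x [0,1] is continuous
   with H(x,0) = f x and H(x,1) = g x for x in U. *)
Definition homotopic_on (X Y : topologicalType) (U : set X) (f g : X -> Y) :=
  exists H : X * R -> Y,
    {within U `*` unit_interval, continuous H} /\
    (forall x, U x -> H (x, 0%R) = f x /\ H (x, 1%R) = g x).

Definition hdist_le (X Y : topologicalType) (f g : X -> Y) (n : nat) :=
  exists U : 'I_n.+1 -> set X,
    (forall j, open (U j)) /\ \bigcup_j U j = setT /\
    (forall j, homotopic_on (U j) f g).

(* Homotopic distance D(f,g) : [Some n] with n least such that hdist_le f g n,
   and [None] (= infinity) if no such cover exists. *)
Definition hdist (X Y : topologicalType) (f g : X -> Y) : option nat :=
  match pselect (exists n, hdist_le f g n) with
  | left H => Some (ex_minn (P := fun n => `[< hdist_le f g n >]) 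
                      (let: ex_intro n Hn := H in ex_intro _ n (asboolT Hn)))
  | right _ => None
  end.

From mathcomp Require Import all_boot all_order all_algebra.
From mathcomp Require Import all_classical all_reals all_analysis.
From mathcomp Require Import monoid.
From mathcomp Require Import zify.
Import GRing.Theory.

(* Right multiplication by the continuous map x |-> x^(-b) turns a homotopy
   mu_a ~ mu_b on U into a homotopy mu_(a-b) ~ e on U, and right multiplication
   by mu_b turns it back.  Hence both pairs of maps admit exactly the same
   homotopy covers, and their homotopic distances agree. *)

Local Open Scope group_scope.

Section IntegerPowers.
Variable G : groupType.
Implicit Types x : G.

Lemma zpowg_subn x (m n : nat) : zpowg (m%:Z - n%:Z)%R x = x ^+ m / x ^+ n.
Proof.
case: (leqP n m) => [le_nm | lt_mn].
  by rewrite subzn //=; exact: expgnFr.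
have -> : (m%:Z - n%:Z)%R = Negz (n - m).-1.
  by rewrite NegzE prednK ?subn_gt0 // -opprB subzn // ltnW.
rewrite /= prednK ?subn_gt0 //.
have -> : x ^+ n = x ^+ m * x ^+ (n - m) by rewrite -expgnDr subnKC // ltnW.
have cV : commute (x ^+ m) (x ^+ (n - m))^-1.
  exact/commuteV/commuteX2/commute_refl.
by rewrite invgM mulgA cV -mulgA mulgV mulg1.
Qed.

Lemma int_subn (c : int) : exists m n : nat, c = (m%:Z - n%:Z)%R.
Proof.
case: c => [m|n]; first by exists m, 0%N; rewrite subr0.
by exists 0%N, n.+1; rewrite NegzE sub0r.
Qed.

Lemma zpowgD x (c d : int) : zpowg (c + d)%R x = zpowg c x * zpowg d x.
Proof.
have [m1 [n1 ->]] := int_subn c; have [m2 [n2 ->]] := int_subn d.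
have -> : ((m1%:Z - n1%:Z) + (m2%:Z - n2%:Z))%R =
          ((m1 + m2)%N%:Z - (n1 + n2)%N%:Z)%R by rewrite !PoszD; lia.
have cX k l : commute (x ^+ k) (x ^+ l) by exact/commuteX2/commute_refl.
have c1 : commute (x ^+ n1)^-1 (x ^+ m2) by exact/commute_sym/commuteV.
have c2 : commute (x ^+ n2)^-1 (x ^+ n1)^-1 by exact/commuteV/commute_sym/commuteV.
rewrite !zpowg_subn !expgnDr invgM c2 !mulgA; congr (_ * _).
by rewrite -!mulgA c1.
Qed.

End IntegerPowers.

Local Open Scope classical_set_scope.

Section TopologicalGroups.
Variable G : topGroupType.

Lemma continuousM (T : topologicalType) (f g : T -> G) :
  continuous f -> continuous g -> continuous (fun x => f x * g x).
Proof.
move=> cf cg x.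
apply: (@continuous2_cvg _ _ _ _ _ _ f g (fun a b : G => a * b)) => //.
- exact: (mulg_continuous (f x, g x)).
- exact: cf.
- exact: cg.
Qed.

Lemma continuous_expg n : continuous (fun x : G => x ^+ n).
Proof.
elim: n => [|n IHn]; first exact: cst_continuous.
have -> : (fun x : G => x ^+ n.+1) = (fun x => x * x ^+ n).
  by apply: funext => x; rewrite expgS.
by apply: continuousM => // x; exact: cvg_id.
Qed.

Lemma continuous_powmap c : continuous (powmap c : G -> G).
Proof.
case: c => n /=; first exact: continuous_expg.
move=> x; apply: (@continuous_comp _ _ _ (fun y : G => y ^+ n.+1) (fun y => y^-1)).
- exact: continuous_expg.
- exact: invg_continuous.
Qed.

Lemma homotopic_on_mulr (X : topologicalType) (U : set X) (f g h : X -> G) :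
  continuous h -> homotopic_on U f g ->
  homotopic_on U (fun x => f x * h x) (fun x => g x * h x).
Proof.
move=> ch [H [cH H01]].
exists (fun p => H p * h p.1); split.
  have -> : from_subspace (U `*` unit_interval) (fun p => H p * h p.1) =
            (fun p => from_subspace (U `*` unit_interval) H p *
                      from_subspace (U `*` unit_interval) (h \o fst) p) by [].
  apply: continuousM => //.
  by apply: continuous_subspaceT => p; apply: continuous_comp; [exact: cvg_fst | exact: ch].
by move=> x Ux; have [-> ->] := H01 x Ux.
Qed.

Lemma homotopic_on_powmap (a b : int) (U : set G) :
  homotopic_on U (powmap a) (powmap b) <->
  homotopic_on U (powmap (a - b)%R) (fun _ => 1).
Proof.
have mul_powmap c d : (fun x : G => powmap c x * powmap d x) = powmap (c + d)%R.
  by apply: funext => x; rewrite /powmap zpowgD.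
split=> [|hU].
  move/(@homotopic_on_mulr _ _ _ _ _ (continuous_powmap (- b)%R)).
  by rewrite !mul_powmap subrr.
have := @homotopic_on_mulr _ _ _ _ _ (continuous_powmap b) hU.
rewrite mul_powmap subrK.
suff -> : (fun x : G => 1 * powmap b x) = powmap b by [].
by apply: funext => x; rewrite mul1g.
Qed.

End TopologicalGroups.

Section HomotopicDistance.
Variables (X Y : topologicalType) (f g f' g' : X -> Y).

Lemma eq_hdist_le :
  (forall U : set X, homotopic_on U f g <-> homotopic_on U f' g') ->
  hdist_le f g = hdist_le f' g'.
Proof.
move=> fg_f'g'; apply/funext => n; apply/propext.
by split=> -[U [oU [cU hU]]]; exists U; split=> //; split=> // j; apply/fg_f'g'.
Qed.

Lemma eq_hdist : hdist_le f g = hdist_le f' g' -> hdist f g = hdist f' g'.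
Proof. by rewrite /hdist => ->. Qed.

End HomotopicDistance.

Theorem proposition4p4 (G : topGroupType) (a b : int) :
  hdist (powmap a : G -> G) (powmap b) =
  hdist (powmap (a - b)%R : G -> G) (fun _ : G => (1 : G)%g).
Proof. by apply/eq_hdist/eq_hdist_le => U; exact: homotopic_on_powmap. Qed.
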